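(* Consider equations $u_{tx}=f(t,x,u)$ with $f_{uu}\neq0$. Up to the equivalence transformations of this class ($\bar t=T(t),\ \bar x=X(x),\ v=mu+Y(t,x)$ and $\bar t=T(x),\ \bar x=X(t),\ v=mu+Y(t,x)$, with $m$ a real constant and $T'X'm\neq0$), there are exactly two families of equations admitting a one-parameter Lie point symmetry group generated by one of the canonical operators $\partial_t+\partial_x+\epsilon u\partial_u$, $\partial_t+\epsilon u\partial_u$ ($\epsilon=0,1$), $u\partial_u$, $g(t,x)\partial_u$ ($g\neq0$). They are: (1) symmetry $\langle\partial_t+\partial_x+\epsilon u\partial_u\rangle$ ($\epsilon=0,1$): $f=e^{\epsilon t}\tilde f(\theta,\omega)$, $\theta=t-x$, $\omega=e^{-\epsilon t}u$, with $\tilde f_{\omega\omega}\neq0$; (2) symmetry $\langle\partial_t+\epsilon u\partial_u\rangle$ ($\epsilon=0,1$): $f=e^{\epsilon t}\tilde f(x,\omega)$, $\omega=e^{-\epsilon t}u$, with $\tilde f_{\omega\omega}\neq0$. Here $\tilde f$ is an arbitrary smooth function of the indicated arguments.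
   Context: All functions are real-valued and smooth; considerations are local. *)

From mathcomp Require Import all_boot all_order all_algebra.
From mathcomp Require Import all_classical all_reals all_analysis.
Set Implicit Arguments. Unset Strict Implicit. Unset Printing Implicit Defensive.
Import Order.TTheory GRing.Theory Num.Theory.
Import numFieldNormedType.Exports.
Local Open Scope ring_scope.

Section Defs.
Context {R : realType}.

Inductive dir3 := Dt3 | Dx3 | Du3.

Definition pd3 (d : dir3) (F : R -> R -> R -> R) : R -> R -> R -> R :=
  match d with
  | Dt3 => fun t x u => derive1 (fun y => F y x u) t
  | Dx3 => fun t x u => derive1 (fun y => F t y u) x
  | Du3 => fun t x u => derive1 (fun y => F t x y) u
  end.

Definition iter_pd3 (l : seq dir3) (F : R -> R -> R -> R) := foldr pd3 F l.

Definition smooth3 (F : R -> R -> R -> R) : Prop :=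
  forall l : seq dir3,
    let G := iter_pd3 l F in
    continuous (fun v : R * R * R => G v.1.1 v.1.2 v.2) /\
    (forall t x u, [/\ derivable (fun y => G y x u) t 1,
                       derivable (fun y => G t y u) x 1 &
                       derivable (fun y => G t x y) u 1]).

Inductive dir2 := D1 | D2.

Definition pd2 (d : dir2) (F : R -> R -> R) : R -> R -> R :=
  match d with
  | D1 => fun a b => derive1 (fun y => F y b) a
  | D2 => fun a b => derive1 (fun y => F a y) b
  end.

Definition iter_pd2 (l : seq dir2) (F : R -> R -> R) := foldr pd2 F l.

Definition smooth2 (F : R -> R -> R) : Prop :=
  forall l : seq dir2,
    let G := iter_pd2 l F in
    continuous (fun v : R * R => G v.1 v.2) /\
    (forall a b, derivable (fun y => G y b) a 1 /\ derivable (fun y => G a y) b 1).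

(* Jet coordinates: p = u_t, q = u_x, r = u_tt, s = u_tx, w = u_xx. *)

Definition Dx0 (G : R -> R -> R -> R) (t x u q : R) : R :=
  pd3 Dx3 G t x u + q * pd3 Du3 G t x u.
Definition Dt0 (G : R -> R -> R -> R) (t x u p : R) : R :=
  pd3 Dt3 G t x u + p * pd3 Du3 G t x u.

Definition etaX (tau xi eta : R -> R -> R -> R) (t x u p q : R) : R :=
  Dx0 eta t x u q - Dx0 tau t x u q * p - Dx0 xi t x u q * q.

Definition DtJ1 (H : R -> R -> R -> R -> R -> R) (t x u p q r s : R) : R :=
  derive1 (fun y => H y x u p q) t + p * derive1 (fun y => H t x y p q) u
  + r * derive1 (fun y => H t x u y q) p + s * derive1 (fun y => H t x u p y) q.

Definition etaXT (tau xi eta : R -> R -> R -> R) (t x u p q r s w : R) : R :=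
  DtJ1 (etaX tau xi eta) t x u p q r s - Dt0 tau t x u p * s - Dt0 xi t x u p * w.

(* infinitesimal invariance criterion: pr^(2) Q (u_tx - f) = 0 on u_tx = f *)
Definition is_Lie_sym (f tau xi eta : R -> R -> R -> R) : Prop :=
  forall t x u p q r w,
    etaXT tau xi eta t x u p q r (f t x u) w =
    tau t x u * pd3 Dt3 f t x u + xi t x u * pd3 Dx3 f t x u
    + eta t x u * pd3 Du3 f t x u.

End Defs.

From mathcomp Require Import all_boot all_order all_algebra.
From mathcomp Require Import all_classical all_reals all_analysis.
From mathcomp Require Import ring lra.
Import Order.TTheory GRing.Theory Num.Theory.
Import numFieldNormedType.Exports.
Local Open Scope ring_scope.

(* For Q = d_t + b d_x + k u d_u with constant b, k the prolongation coefficient is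
   eta^{xt} = k u_tx, so the symmetry condition is the linear equation
   f_t + b f_x + k u f_u = k f.  Along an orbit h |-> (t + h, x + b h, e^{kh} u) of Q
   it says that e^{-kh} f has zero derivative, hence f = e^{kt} f(0, x - bt, e^{-kt} u);
   b = 1 and b = 0 are cases (1) and (2).  For Q = u d_u the condition is Euler's
   equation f = u f_u, and for Q = g d_u it reads g_tx = g f_u: both force f_uu = 0
   somewhere.  Only partial derivatives are available, so the chain rule along orbits
   comes from the mean value theorem and continuity of the partial derivatives. *)

Section Calculus.
Context {R : realType}.
Local Open Scope classical_set_scope.

Lemma MVT_increment (H G : R -> R) (y h : R) :
  (forall a : R, is_derive a (1 : R) H (G a)) ->
  exists2 c, `|y - c| <= `|h| & H (h + y) - H y = G c * h.
Proof.
move=> dH.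
have cH a b : {within `[a, b], continuous H}.
  apply: continuous_subspaceT => z.
  exact/differentiable_continuous/derivable1_diffP/ex_derive.
have [hp|hn] := ltP 0 h.
- have le : y <= h + y by lra.
  have [c + ->] := MVT_segment le (fun z _ => dH z) (cH _ _).
  rewrite in_itv /= (gtr0_norm hp) => /andP[c1 c2].
  by exists c; [rewrite ler_distlC; apply/andP; split; lra | rewrite addrK].
- have le : h + y <= y by lra.
  have [c + eqc] := MVT_segment le (fun z _ => dH z) (cH _ _).
  rewrite in_itv /= (ler0_norm hn) => /andP[c1 c2].
  exists c; first by rewrite ler_distlC; apply/andP; split; lra.
  by rewrite -[LHS]opprK opprB eqc; ring.
Qed.

Lemma is_derive_diag (H G : R -> R -> R) (y dH : R) :
  (forall a b : R, is_derive a (1 : R) (fun z => H z b) (G a b)) ->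
  {for (y, y), continuous (fun v : R * R => G v.1 v.2)} ->
  is_derive y (1 : R) (H y) dH ->
  is_derive y (1 : R) (fun h => H h h) (G y y + dH).
Proof.
move=> dH1 cG dH2.
suff qcvg : (fun h => h^-1 *: (((fun h => H h h) \o shift y) (h *: 1) - H y y))
    @ 0^' --> G y y + dH.
  by apply: DeriveDef; [apply/cvg_ex; exists (G y y + dH) | exact: cvg_lim].
have -> : (fun h => h^-1 *: (((fun h => H h h) \o shift y) (h *: 1) - H y y)) =
    (fun h => h^-1 * (H (h + y) (h + y) - H y (h + y)) +
              h^-1 *: ((H y \o shift y) (h *: 1) - H y y)).
  apply/funext => h /=; rewrite /shift /= -[h *: 1]/(h * 1) mulr1.
  by rewrite -[_ *: (_ - _)]/(_ * _) -mulrDr addrA subrK.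
apply: cvgD; last first.
  have := @ex_derive _ _ _ _ _ _ _ dH2.
  by have <- : 'D_1 (H y) y = dH := derive_val.
apply/cvgrPdist_lt => e e0.
move/cvgrPdist_lt/(_ e e0)/nbhs_ballP: cG => [d /= d0 near_y].
apply/nbhs_ballP; exists d => // h /=; rewrite /ball /= sub0r normrN => hd h0.
have [c yc ->] := MVT_increment _ _ y h (dH1 ^~ (h + y)).
rewrite mulrC mulfK //; apply: (near_y (c, h + y)); split => /=.
- exact: le_lt_trans yc hd.
- by rewrite /ball /= (_ : y - (h + y) = - h) ?normrN //; ring.
Qed.

Lemma is_derive_comp (g phi : R -> R) (y dphi : R) :
  is_derive y (1 : R) phi dphi -> derivable g (phi y) 1 ->
  is_derive y (1 : R) (fun z => g (phi z)) (derive1 g (phi y) * dphi).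
Proof.
move=> dphi_y dg; apply: is_derive1_comp.
by rewrite derive1E; apply: derivableP.
Qed.

Lemma is_derive_scale (s y : R) : is_derive y (1 : R) (fun z => s * z) s.
Proof.
have -> : (fun z => s * z) = s \*: (@id R) by [].
by apply: is_derive_eq; rewrite -[_ *: _]/(_ * _) mulr1.
Qed.

Lemma is_derive_affine (c s y : R) : is_derive y (1 : R) (fun z => c + s * z) s.
Proof.
have -> : (fun z => c + s * z) = cst c + (fun z => s * z) by [].
have ds := is_derive_scale s y.
by apply: is_derive_eq; rewrite add0r.
Qed.

Lemma is_derive_translate (c y : R) : is_derive y (1 : R) (fun z => c + z) 1.
Proof. by have := is_derive_affine c 1 y; under eq_fun do rewrite mul1r. Qed.

Lemma is_derive_expR_scale (e y : R) :
  is_derive y (1 : R) (fun z => expR (e * z)) (e * expR (e * y)).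
Proof.
have := is_derive_comp expR _ _ _ (is_derive_scale e y) (@derivable_expR R _).
by move/is_derive_eq; apply; rewrite derive1E derive_val mulrC.
Qed.

Lemma continuous_comp3 (P : R -> R -> R -> R) (g1 g2 g3 : R * R -> R) v :
  continuous (fun w : R * R * R => P w.1.1 w.1.2 w.2) ->
  {for v, continuous g1} -> {for v, continuous g2} -> {for v, continuous g3} ->
  {for v, continuous (fun v => P (g1 v) (g2 v) (g3 v))}.
Proof.
move=> cP c1 c2 c3.
exact: (continuous_comp (cvg_pair (cvg_pair c1 c2) c3) (cP _)).
Qed.

Lemma continuous_affine (c s : R) : continuous (fun z : R => c + s * z).
Proof.
move=> z; apply: cvgD; first exact: cvg_cst.
by apply: cvgM; [exact: cvg_cst | exact: cvg_id].
Qed.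

Lemma continuous_expR_scale (e u : R) : continuous (fun z : R => expR (e * z) * u).
Proof.
move=> z; apply: cvgM; last exact: cvg_cst.
apply: continuous_comp; last exact: continuous_expR.
by apply: cvgM; [exact: cvg_cst | exact: cvg_id].
Qed.

End Calculus.

Section Flow.
Context {R : realType}.
Local Open Scope classical_set_scope.
Variables (F : R -> R -> R -> R) (b k : R).
Hypothesis hF : smooth3 F.

Definition flow_invariant : Prop :=
  forall t x u h, F (t + h) (x + b * h) (expR (k * h) * u) = expR (k * h) * F t x u.

Definition lie_deriv (t x u : R) : R :=
  pd3 Dt3 F t x u + b * pd3 Dx3 F t x u + k * u * pd3 Du3 F t x u.

Lemma is_derive_flow (t x u h : R) :
  is_derive h (1 : R) (fun h => F (t + h) (x + b * h) (expR (k * h) * u))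
    (lie_deriv (t + h) (x + b * h) (expR (k * h) * u)).
Proof.
have dF := (hF [::]).2.
have /= cFt := (hF [:: Dt3]).1; have /= cFx := (hF [:: Dx3]).1.
have dU : is_derive h (1 : R) (fun z => expR (k * z) * u) (k * (expR (k * h) * u)).
  have de := is_derive_expR_scale k h.
  have -> : (fun z => expR (k * z) * u) = u \*: (fun z => expR (k * z)).
    by apply/funext => z; rewrite mulrC.
  by apply: is_derive_eq; rewrite -[_ *: _]/(_ * _); ring.
set w := expR (k * h) * u.
suff : is_derive h (1 : R) (fun h => F (t + h) (x + b * h) (expR (k * h) * u))
    (pd3 Dt3 F (t + h) (x + b * h) w +
     (pd3 Dx3 F (t + h) (x + b * h) w * b + pd3 Du3 F (t + h) (x + b * h) w * (k * w))).
  by move/is_derive_eq; apply; rewrite /lie_deriv; ring.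
apply: (is_derive_diag (fun a c => F (t + a) (x + b * c) (expR (k * c) * u))
    (fun a c => pd3 Dt3 F (t + a) (x + b * c) (expR (k * c) * u))).
- move=> a c; have [dFt _ _] := dF (t + a) (x + b * c) (expR (k * c) * u).
  have := is_derive_comp (fun y => F y (x + b * c) (expR (k * c) * u)) _ _ _
    (is_derive_translate t a) dFt.
  by move/is_derive_eq; apply; rewrite mulr1.
- apply: (continuous_comp3 (pd3 Dt3 F) _ _ _ _ cFt).
  + by apply: cvgD; [exact: cvg_cst | exact: cvg_fst].
  + exact: continuous_comp cvg_snd (continuous_affine x b _).
  + exact: continuous_comp cvg_snd (continuous_expR_scale k u _).
apply: (is_derive_diag (fun a c => F (t + h) (x + b * a) (expR (k * c) * u))
    (fun a c => pd3 Dx3 F (t + h) (x + b * a) (expR (k * c) * u) * b)).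
- move=> a c; have [_ dFx _] := dF (t + h) (x + b * a) (expR (k * c) * u).
  exact: (is_derive_comp (fun y => F (t + h) y (expR (k * c) * u)) _ _ _
    (is_derive_affine x b a) dFx).
- apply: cvgM; last exact: cvg_cst.
  apply: (continuous_comp3 (pd3 Dx3 F) _ _ _ _ cFx); first exact: cvg_cst.
  + exact: continuous_comp cvg_fst (continuous_affine x b _).
  + exact: continuous_comp cvg_snd (continuous_expR_scale k u _).
- have [_ _ dFu] := dF (t + h) (x + b * h) w.
  exact: (is_derive_comp (fun y => F (t + h) (x + b * h) y) _ _ _ dU dFu).
Qed.

Lemma flow_invariant_of_lie_deriv :
  (forall t x u, lie_deriv t x u = k * F t x u) -> flow_invariant.
Proof.
move=> hL t x u h.
pose phi := (fun h => expR (- k * h)) *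
  (fun h => F (t + h) (x + b * h) (expR (k * h) * u)).
have dphi h' : is_derive h' (1 : R) phi 0.
  have de := is_derive_expR_scale (- k) h'; have dF := is_derive_flow t x u h'.
  by apply: is_derive_eq; rewrite hL -![_ *: _]/(_ * _); ring.
have := @is_derive_0_is_cst R phi h 0 dphi.
rewrite /phi mulrfctE !mulr0 !addr0 expR0 !mul1r => <-.
by rewrite mulrA -expRD mulNr subrr expR0 mul1r.
Qed.

Lemma lie_deriv_of_flow_invariant :
  flow_invariant -> forall t x u, lie_deriv t x u = k * F t x u.
Proof.
move=> hI t x u.
have := is_derive_flow t x u 0; rewrite !mulr0 !addr0 expR0 mul1r.
under eq_fun do rewrite hI.
have dE : is_derive (0 : R) (1 : R) (fun h => expR (k * h) * F t x u) (k * F t x u).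
  have de := is_derive_expR_scale k 0.
  have -> : (fun h => expR (k * h) * F t x u) = F t x u \*: (fun h => expR (k * h)).
    by apply/funext => h; rewrite mulrC.
  by apply: is_derive_eq; rewrite mulr0 expR0 mulr1 -[_ *: _]/(_ * _) mulrC.
by move=> dL; rewrite -(@derive_val _ _ _ _ _ _ _ dL) (@derive_val _ _ _ _ _ _ _ dE).
Qed.

Lemma flow_invariant_repr :
  flow_invariant ->
  forall t x u, F t x u = expR (k * t) * F 0 (x - b * t) (expR (- (k * t)) * u).
Proof.
move=> hI t x u; rewrite -hI add0r subrK mulrA -expRD.
by rewrite addrN expR0 mul1r.
Qed.

Lemma flow_invariant_of_repr (G : R -> R -> R) :
  (forall t x u, F t x u = expR (k * t) * G (x - b * t) (expR (- (k * t)) * u)) ->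
  flow_invariant.
Proof.
move=> hG t x u h; rewrite !hG mulrA -expRD mulrA -expRD.
have -> : x + b * h - b * (t + h) = x - b * t by ring.
have -> : - (k * (t + h)) + k * h = - (k * t) by ring.
by rewrite addrC -mulrDr.
Qed.

End Flow.

Section Prolongation.
Context {R : realType}.

Lemma derive1_scale (s y : R) : derive1 (fun z => s * z) y = s.
Proof. by rewrite derive1E (@derive_val _ _ _ _ _ _ _ (is_derive_scale s y)). Qed.

Lemma derive1_scaler (s y : R) : derive1 (fun z => z * s) y = s.
Proof. by under eq_fun do rewrite mulrC; exact: derive1_scale. Qed.

Lemma etaXT_linear (a c k t x u p q r s w : R) :
  etaXT (fun _ _ _ => a) (fun _ _ _ => c) (fun _ _ u => k * u) t x u p q r s w = k * s.
Proof.
rewrite /etaXT.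
have -> : etaX (fun _ _ _ => a) (fun _ _ _ => c) (fun _ _ u : R => k * u) =
    fun _ _ _ _ q => q * k.
  apply/funext => t'; apply/funext => x'; apply/funext => u'; apply/funext => p'.
  by apply/funext => q'; rewrite /etaX /Dx0 /pd3 !derive1_cst derive1_scale; ring.
by rewrite /DtJ1 /Dt0 /pd3 !derive1_cst derive1_scaler; ring.
Qed.

Lemma etaXT_fun (g : R -> R -> R) (t x u p q r s w : R) :
  etaXT (fun _ _ _ => 0) (fun _ _ _ => 0) (fun t x _ => g t x) t x u p q r s w =
  derive1 (fun y => derive1 (g y) x) t.
Proof.
rewrite /etaXT.
have -> : etaX (fun _ _ _ => 0) (fun _ _ _ => 0) (fun t x _ => g t x) =
    fun t x _ _ _ => derive1 (g t) x.
  apply/funext => t'; apply/funext => x'; apply/funext => u'; apply/funext => p'.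
  by apply/funext => q'; rewrite /etaX /Dx0 /pd3 !derive1_cst; ring.
by rewrite /DtJ1 /Dt0 /pd3 !derive1_cst; ring.
Qed.

Lemma is_Lie_sym_lie_deriv (F : R -> R -> R -> R) (b k : R) :
  is_Lie_sym F (fun _ _ _ => 1) (fun _ _ _ => b) (fun _ _ u => k * u) <->
  forall t x u, lie_deriv F b k t x u = k * F t x u.
Proof.
rewrite /is_Lie_sym /lie_deriv; split=> [hS t x u | hL t x u p q r w].
- by have := hS t x u 0 0 0 0; rewrite etaXT_linear mul1r => ->.
- by rewrite etaXT_linear mul1r hL.
Qed.

Lemma is_Lie_sym_flow_invariant (F : R -> R -> R -> R) (b k : R) : smooth3 F ->
  is_Lie_sym F (fun _ _ _ => 1) (fun _ _ _ => b) (fun _ _ u => k * u) <->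
  flow_invariant F b k.
Proof.
move=> hF; split=> [/is_Lie_sym_lie_deriv | hI].
- exact: flow_invariant_of_lie_deriv.
- exact/is_Lie_sym_lie_deriv/lie_deriv_of_flow_invariant.
Qed.

End Prolongation.

Section Slice.
Context {R : realType}.
Local Open Scope classical_set_scope.
Variables (F : R -> R -> R -> R) (t0 s : R).
Hypothesis hF : smooth3 F.

Definition slice_dir (d : dir2) : dir3 := if d is D1 then Dx3 else Du3.

Lemma iter_pd2_slice (l : seq dir2) :
  iter_pd2 l (fun a c => F t0 (s * a) c) =
  fun a c => s ^+ count (fun d => if d is D1 then true else false) l *
             iter_pd3 (map slice_dir l) F t0 (s * a) c.
Proof.
elim: l => [|d l IH] /=.
  by apply/funext => a; apply/funext => c; rewrite expr0 mul1r.
rewrite IH; case: d; apply/funext => a; apply/funext => c /=.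
- have [_ dG _] := (hF (map slice_dir l)).2 t0 (s * a) c.
  have dGs := is_derive_comp _ _ _ _ (is_derive_scale s a) dG.
  rewrite derive1Ml; last exact: (@ex_derive _ _ _ _ _ _ _ dGs).
  by rewrite derive1E (@derive_val _ _ _ _ _ _ _ dGs) exprS; ring.
- have [_ _ dG] := (hF (map slice_dir l)).2 t0 (s * a) c.
  by rewrite derive1Ml.
Qed.

Lemma smooth2_slice : smooth2 (fun a c => F t0 (s * a) c).
Proof.
move=> l /=; rewrite iter_pd2_slice; split.
- move=> v; apply: cvgM; first exact: cvg_cst.
  apply: (continuous_comp3 _ _ _ _ _ (hF _).1); [exact: cvg_cst | | exact: cvg_snd].
  by apply: cvgM; [exact: cvg_cst | exact: cvg_fst].
- move=> a c; have [_ dG dGu] := (hF (map slice_dir l)).2 t0 (s * a) c.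
  have dGs := is_derive_comp _ _ _ _ (is_derive_scale s a) dG.
  split; apply: derivableZ; [exact: (@ex_derive _ _ _ _ _ _ _ dGs) | exact: dGu].
Qed.

End Slice.

Section Degenerate.
Context {R : realType}.

Lemma Euler_derive2_eq0 (G : R -> R) (y : R) :
  (forall z, G z = z * derive1 G z) -> derivable (derive1 G) y 1 ->
  y * derive1 (derive1 G) y = 0.
Proof.
move=> hG dG'.
have E : G = (fun z => z) * derive1 G by apply/funext => z; rewrite mulrfctE hG.
have dP := @is_deriveM _ _ (fun z => z) (derive1 G) y 1 1 _
  (is_derive_id y 1) (derivableP dG').
have := @derive_val _ _ _ _ _ _ _ dP.
by rewrite -E -!derive1E -[_ *: _]/(_ * _) -[_ *: 1]/(_ * 1); lra.
Qed.

Lemma Lie_sym_dilation_derive2_eq0 (F : R -> R -> R -> R) : smooth3 F ->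
  is_Lie_sym F (fun _ _ _ => 0) (fun _ _ _ => 0) (fun _ _ u => u) ->
  forall t x, pd3 Du3 (pd3 Du3 F) t x 1 = 0.
Proof.
move=> hF hS t x.
have hE z : F t x z = z * pd3 Du3 F t x z.
  have eta1 : (fun _ _ u => u) = (fun _ _ u => 1 * u) :> (R -> R -> R -> R).
    by apply/funext => ?; apply/funext => ?; apply/funext => ?; rewrite mul1r.
  rewrite eta1 in hS.
  by have := hS t x z 0 0 0 0; rewrite etaXT_linear !mul0r !add0r !mul1r.
have [_ _ dFu] := (hF [:: Du3]).2 t x 1.
by have := Euler_derive2_eq0 _ 1 hE dFu; rewrite mul1r.
Qed.

Lemma Lie_sym_shift_derive2_eq0 (F : R -> R -> R -> R) (g : R -> R -> R) (t x : R) :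
  smooth3 F -> g t x != 0 ->
  is_Lie_sym F (fun _ _ _ => 0) (fun _ _ _ => 0) (fun t x _ => g t x) ->
  forall u, pd3 Du3 (pd3 Du3 F) t x u = 0.
Proof.
move=> hF g0 hS u.
have [_ _ /= dFu] := (hF [:: Du3]).2 t x u.
have := derive1Ml (g t x) dFu.
have -> : (fun u => g t x * pd3 Du3 F t x u) =
    fun _ => derive1 (fun y => derive1 (g y) x) t.
  by apply/funext => z; have := hS t x z 0 0 0 0; rewrite etaXT_fun => ->; ring.
by rewrite derive1_cst => /esym/eqP; rewrite mulf_eq0 (negbTE g0) => /eqP.
Qed.

End Degenerate.

Theorem theorem8 (R : realType) (f : R -> R -> R -> R)
  (hf : smooth3 f)
  (hfuu : forall t x u, pd3 Du3 (pd3 Du3 f) t x u != 0) :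
  (* (1) symmetry d_t + d_x + eps u d_u *)
  (forall eps : R, eps = 0 \/ eps = 1 ->
     (is_Lie_sym f (fun _ _ _ => 1) (fun _ _ _ => 1) (fun _ _ u => eps * u) <->
      exists ft : R -> R -> R,
        [/\ smooth2 ft,
            (forall th om, pd2 D2 (pd2 D2 ft) th om != 0) &
            (forall t x u,
               f t x u = expR (eps * t) * ft (t - x) (expR (- (eps * t)) * u))]))
  /\
  (* (2) symmetry d_t + eps u d_u *)
  (forall eps : R, eps = 0 \/ eps = 1 ->
     (is_Lie_sym f (fun _ _ _ => 1) (fun _ _ _ => 0) (fun _ _ u => eps * u) <->
      exists ft : R -> R -> R,
        [/\ smooth2 ft,
            (forall y om, pd2 D2 (pd2 D2 ft) y om != 0) &
            (forall t x u,
               f t x u = expR (eps * t) * ft x (expR (- (eps * t)) * u))]))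
  /\
  (* no equation of the class admits u d_u *)
  ~ is_Lie_sym f (fun _ _ _ => 0) (fun _ _ _ => 0) (fun _ _ u => u)
  /\
  (* no equation of the class admits g(t,x) d_u with g nonzero *)
  (forall g : R -> R -> R, smooth2 g -> (exists t x, g t x != 0) ->
     ~ is_Lie_sym f (fun _ _ _ => 0) (fun _ _ _ => 0) (fun t x _ => g t x)).
Proof.
split; [|split; [|split]] => [eps _|eps _||].
- split=> [|[ft [_ _ frep]]].
  + move/(is_Lie_sym_flow_invariant _ _ _ hf)/flow_invariant_repr => frep.
    exists (fun a c => f 0 (-1 * a) c); split; first exact: smooth2_slice.
      by move=> th om; apply: hfuu.
    by move=> t x u; rewrite frep; congr (_ * f 0 _ _); ring.
  + apply/(is_Lie_sym_flow_invariant _ _ _ hf).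
    apply: (flow_invariant_of_repr _ _ _ (fun a c => ft (- a) c)) => t x u.
    by rewrite frep opprB mul1r.
- split=> [|[ft [_ _ frep]]].
  + move/(is_Lie_sym_flow_invariant _ _ _ hf)/flow_invariant_repr => frep.
    exists (fun a c => f 0 (1 * a) c); split; first exact: smooth2_slice.
      by move=> y om; apply: hfuu.
    by move=> t x u; rewrite frep; congr (_ * f 0 _ _); ring.
  + apply/(is_Lie_sym_flow_invariant _ _ _ hf).
    apply: (flow_invariant_of_repr _ _ _ ft) => t x u.
    by rewrite frep mul0r subr0.
- move/(Lie_sym_dilation_derive2_eq0 _ hf)/(_ 0 0)/eqP.
  by rewrite (negbTE (hfuu 0 0 1)).
- move=> g _ [t [x g0]] /(Lie_sym_shift_derive2_eq0 _ _ _ _ hf g0)/(_ 0)/eqP.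
  by rewrite (negbTE (hfuu t x 0)).
Qed.
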